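(* Let $\Lambda^\omega_n$ be the ring of extended symmetric polynomials. Then $\Lambda^\omega_n$ is a free module of rank $2^n$ over $\Lambda_n$. Moreover, let $\tilde\omega_1,\dots,\tilde\omega_n\in\Lambda^\omega_n$ be any elements of the form $\tilde\omega_i=\omega_i+\sum_{j>i}f_{ij}\,\omega_j$ with $f_{ij}\in\mathcal P_n$ (such elements exist). Then multiplication in $\Lambda^\omega_n$ induces a ring isomorphism $$\Lambda_n\otimes_{\mathbb Q}\textstyle\bigwedge[\tilde\omega_1,\dots,\tilde\omega_n]\;\xrightarrow{\ \sim\ }\;\Lambda^\omega_n .$$
   Context: Let $\mathcal P_n=\mathbb Q[x_1,\dots,x_n]$ and $\Lambda_n=\mathcal P_n^{S_n}$ the ring of symmetric polynomials. The extended polynomial ring is $\mathcal P^\omega_n=\mathbb Q[x_1,\dots,x_n]\otimes_{\mathbb Q}\bigwedge[\omega_1,\dots,\omega_n]$, where the $\omega_i$ are odd (they anticommute with each other, square to zero, and commute with all $x_j$). The symmetric group $S_n$ acts on $\mathcal P^\omega_n$ by ring automorphisms determined, for the simple transpositions $s_i$ ($1\le i\le n-1$), by $s_i(x_j)=x_{s_i(j)}$ and $s_i(\omega_j)=\omega_j+\delta_{ij}(x_j-x_{j+1})\omega_{j+1}$. The extended divided difference operators are $\partial_i=(\mathrm{id}-s_i)/(x_i-x_{i+1})$ on $\mathcal P^\omega_n$. The ring of extended symmetric polynomials is $\Lambda^\omega_n=(\mathcal P^\omega_n)^{S_n}=\bigcap_{i=1}^{n-1}\ker\partial_i$. *)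

From mathcomp Require Import all_boot all_algebra all_fingroup.
From mathcomp Require Import mpoly.
Set Implicit Arguments. Unset Strict Implicit. Unset Printing Implicit Defensive.
Import GRing.Theory.
Local Open Scope ring_scope.

(* P_n = Q[x_1..x_n], variables indexed by 'I_n (x_{j+1} <-> 'X_j). *)
Notation Pn n := {mpoly rat[n]}.

(* The extended polynomial ring P^w_n = P_n (x) /\[w_1..w_n], represented by
   its coordinates in the P_n-basis w_S = w_{i1} w_{i2} ... w_{ik}
   (i1 < ... < ik, S = {i1,..,ik}). Addition is pointwise. *)
Definition ext (n : nat) := {ffun {set 'I_n} -> Pn n}.

(* number of inversions: pairs (i in S, j in T) with j < i;
   w_S w_T = (-1)^inv S T w_(S u T) when S, T are disjoint, 0 otherwise *)
Definition inv n (S T : {set 'I_n}) : nat :=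
  #|[set p : 'I_n * 'I_n | (p.1 \in S) && (p.2 \in T) && (p.2 < p.1)%N]|.

Definition emul n (a b : ext n) : ext n :=
  [ffun U => \sum_(S : {set 'I_n}) \sum_(T : {set 'I_n})
     if (S :&: T == set0) && (S :|: T == U)
     then (-1) ^+ inv S T * a S * b T else 0].

Definition cmul n (p : Pn n) (a : ext n) : ext n := [ffun S => p * a S].

Definition eone n : ext n := [ffun S => (S == set0)%:R].
Definition ew n (j : 'I_n) : ext n := [ffun S => (S == [set j])%:R].

Definition wprod n (l : seq (ext n)) : ext n := foldr (@emul n) (eone n) l.

(* The ring endomorphism of P^w_n determined by x_j |-> x_{s(j)} (s a
   permutation) and w_j |-> sw j :
   p w_{i1}...w_{ik} |-> s(p) sw(i1) ... sw(ik). *)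
Definition esubst n (s : 'S_n) (sw : 'I_n -> ext n) (a : ext n) : ext n :=
  \sum_(S : {set 'I_n}) cmul (msym s (a S)) (wprod [seq sw j | j <- enum S]).

(* The simple transposition s_i swapping indices a and b (used with b = a+1):
   s_i(x_j) = x_{s_i(j)}, s_i(w_j) = w_j + delta_{ij} (x_j - x_{j+1}) w_{j+1}. *)
Definition simple_act n (a b : 'I_n) (f : ext n) : ext n :=
  esubst (tperm a b)
    (fun j => if j == a then ew a + cmul ('X_a - 'X_b) (ew b) else ew j) f.

(* Lambda^w_n = (P^w_n)^{S_n}: elements fixed by all simple transpositions
   (equivalently, in the kernel of all divided differences d_i). *)
Definition ext_sym n (f : ext n) : Prop :=
  forall a b : 'I_n, val b = (val a).+1 -> simple_act a b f = f.

(* elements of P_n (x) /\ with coefficients in Lambda_n, i.e.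
   Lambda_n (x) /\[u_1..u_n] in its basis u_S *)
Definition symcoef n (f : ext n) : Prop := forall S, f S \is symmetric.

Definition mult_map n (wt : 'I_n -> ext n) (f : ext n) : ext n :=
  \sum_(S : {set 'I_n}) cmul (f S) (wprod [seq wt j | j <- enum S]).

Definition triangular_form n (wt : 'I_n -> ext n) : Prop :=
  exists F : 'I_n -> 'I_n -> Pn n,
    forall i, wt i = ew i + \sum_(j : 'I_n | (i < j)%N) cmul (F i j) (ew j).

From Pilot Require Import Defs.
From HB Require Import structures.
From mathcomp Require Import all_boot all_algebra all_fingroup.
From mathcomp Require Import mpoly.
From mathcomp Require Import ring zify.
Import GRing.Theory.
Local Open Scope ring_scope.
Set Implicit Arguments. Unset Strict Implicit. Unset Printing Implicit Defensive.

(* Order the subsets S of {0..n-1} by their weight sum_(i in S) i.  For a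
   triangular family, the ordered product wt_S = wt_i1 ... wt_ik (i1 < ... < ik)
   is w_S plus terms w_T of larger weight, so the wt_S form a P_n-basis of
   P^w_n and f (x) wt_S |-> f wt_S is a P_n-linear bijection.  Since the wt_i
   are odd of degree one, they anticommute and square to zero, which makes this
   bijection multiplicative.  When the wt_i are S_n-invariant, s_i acts on
   coordinates in the basis wt_S by permuting variables only, so an element is
   invariant exactly when all its coordinates are symmetric; this gives the
   isomorphism and the free basis of rank 2^n.  Invariant triangular elements
   exist: wt_i = sum_(j >= i) e_(j-i)(x_1, ..., x_(j-1)) w_j, 1-indexed. *)

Lemma sum_neq0_exists (R : nmodType) (I : finType) (P : pred I) (F : I -> R) :
  \sum_(i | P i) F i != 0 -> exists2 i, P i & F i != 0.
Proof.
move=> /eqP nz.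
have [/existsP[i /andP[Pi Fi]]|none] := boolP [exists i, P i && (F i != 0)].
  by exists i.
case: nz; apply: big1 => i Pi; apply/eqP.
by move: none; rewrite negb_exists => /forallP/(_ i); rewrite Pi negbK.
Qed.

Lemma sum_setU (T : finType) (F : T -> nat) (A B : {set T}) : A :&: B = set0 ->
  (\sum_(i in A :|: B) F i = \sum_(i in A) F i + \sum_(i in B) F i)%N.
Proof.
move=> dAB; have dj : [disjoint A & B] by rewrite -setI_eq0 dAB.
rewrite -(@bigU _ 0%N addn _ (mem A) (mem B) F dj); by apply: eq_bigl => i; rewrite !inE.
Qed.

Section ScalarAction.

Variable n : nat.
Implicit Types (p q : Pn n) (x y : ext n).

Lemma cmulA p q x : cmul p (cmul q x) = cmul (p * q) x.
Proof. by apply/ffunP => S; rewrite !ffunE mulrA. Qed.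

Lemma cmul1 x : cmul 1 x = x.
Proof. by apply/ffunP => S; rewrite !ffunE mul1r. Qed.

Lemma cmul0r x : cmul 0 x = 0.
Proof. by apply/ffunP => S; rewrite !ffunE mul0r. Qed.

Lemma cmulDl x p q : cmul (p + q) x = cmul p x + cmul q x.
Proof. by apply/ffunP => S; rewrite !ffunE mulrDl. Qed.

Lemma cmulNl p x : cmul (- p) x = - cmul p x.
Proof. by apply/ffunP => S; rewrite !ffunE mulNr. Qed.

Lemma cmulrB p : zmod_morphism (cmul p).
Proof. by move=> x y; apply/ffunP => S; rewrite !ffunE mulrBr. Qed.

HB.instance Definition _ p :=
  GRing.isZmodMorphism.Build (ext n) (ext n) (cmul p) (cmulrB p).

End ScalarAction.

Section Multiplication.

Variable n : nat.
Implicit Types (p : Pn n) (x y z : ext n) (S T U : {set 'I_n}).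

Definition ebasis S : ext n := [ffun U => (U == S)%:R].

Lemma ext_expand x : x = \sum_S cmul (x S) (ebasis S).
Proof.
apply/ffunP => U; rewrite sum_ffunE (bigD1 U) //= [X in _ + X]big1 ?addr0.
  by rewrite !ffunE eqxx mulr1.
by move=> S nSU; rewrite !ffunE eq_sym (negbTE nSU) mulr0.
Qed.

Definition emul_const S T U : Pn n :=
  if (S :&: T == set0) && (S :|: T == U) then (-1) ^+ Defs.inv S T else 0.

Lemma emulE x y U : emul x y U = \sum_S \sum_T emul_const S T U * (x S * y T).
Proof.
rewrite ffunE; apply: eq_bigr => S _; apply: eq_bigr => T _.
by rewrite /emul_const; case: ifP; rewrite ?mul0r // mulrA.
Qed.

Lemma emul_const_neq0 S T U :
  emul_const S T U != 0 -> S :&: T = set0 /\ U = S :|: T.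
Proof.
rewrite /emul_const; case: ifP => [/andP[/eqP dST /eqP <-] _ //|_].
by rewrite eqxx.
Qed.

Lemma emulDl x y z : emul (x + y) z = emul x z + emul y z.
Proof.
apply/ffunP => U; rewrite emulE [RHS]ffunE !emulE -big_split.
apply: eq_bigr => S _; rewrite -big_split; apply: eq_bigr => T _.
by rewrite !ffunE mulrDl mulrDr.
Qed.

Lemma emulDr x y z : emul x (y + z) = emul x y + emul x z.
Proof.
apply/ffunP => U; rewrite emulE [RHS]ffunE !emulE -big_split.
apply: eq_bigr => S _; rewrite -big_split; apply: eq_bigr => T _.
by rewrite !ffunE !mulrDr.
Qed.

Lemma emul0r x : emul 0 x = 0.
Proof.
apply/ffunP => U; rewrite emulE [RHS]ffunE big1 // => S _.
by rewrite big1 // => T _; rewrite ffunE mul0r mulr0.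
Qed.

Lemma emulr0 x : emul x 0 = 0.
Proof.
apply/ffunP => U; rewrite emulE [RHS]ffunE big1 // => S _.
by rewrite big1 // => T _; rewrite ffunE !mulr0.
Qed.

Lemma emulNr x y : emul (- x) y = - emul x y.
Proof. by apply/eqP; rewrite -addr_eq0 -emulDl addNr emul0r. Qed.

Lemma emulrB x : zmod_morphism (emul x).
Proof.
move=> y z; rewrite emulDr; congr (_ + _).
by apply/eqP; rewrite -addr_eq0 -emulDr addNr emulr0.
Qed.

Lemma emul_suml I (r : seq I) (P : pred I) (F : I -> ext n) y :
  emul (\sum_(i <- r | P i) F i) y = \sum_(i <- r | P i) emul (F i) y.
Proof. exact: (big_morph (fun x => emul x y) (fun x z => emulDl x z y) (emul0r y)). Qed.

Lemma emulZl p x y : emul (cmul p x) y = cmul p (emul x y).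
Proof.
apply/ffunP => U; rewrite emulE [RHS]ffunE !emulE mulr_sumr.
apply: eq_bigr => S _; rewrite mulr_sumr; apply: eq_bigr => T _.
by rewrite ffunE; ring.
Qed.

Lemma emulZr p x y : emul x (cmul p y) = cmul p (emul x y).
Proof.
apply/ffunP => U; rewrite emulE [RHS]ffunE !emulE mulr_sumr.
apply: eq_bigr => S _; rewrite mulr_sumr; apply: eq_bigr => T _.
by rewrite ffunE; ring.
Qed.

HB.instance Definition _ x :=
  GRing.isZmodMorphism.Build (ext n) (ext n) (emul x) (emulrB x).

Lemma ebasisM S T : emul (ebasis S) (ebasis T) =
  if S :&: T == set0 then cmul ((-1) ^+ Defs.inv S T) (ebasis (S :|: T)) else 0.
Proof.
apply/ffunP => U; rewrite emulE (bigD1 S) //= [X in _ + X]big1 ?addr0; last first.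
  by move=> S' nS'; rewrite big1 // => T0 _; rewrite !ffunE (negbTE nS') mul0r mulr0.
rewrite (bigD1 T) //= [X in _ + X]big1 ?addr0; last first.
  by move=> T' nT'; rewrite !ffunE (negbTE nT') !mulr0.
rewrite !ffunE !eqxx !mulr1 /emul_const.
case: (S :&: T == set0) => /=; last by rewrite ffunE.
by rewrite !ffunE eq_sym; case: (U == S :|: T); rewrite ?mulr1 ?mulr0.
Qed.

Lemma invE S T : Defs.inv S T = (\sum_(i in S) \sum_(j in T) (j < i))%N.
Proof.
rewrite /Defs.inv -sum1_card pair_big /= [LHS]big_mkcond [RHS]big_mkcond.
apply: eq_bigr => p _; rewrite inE.
by case: (p.1 \in S); case: (p.2 \in T) => //=; case: ltnP.
Qed.

Lemma inv_setUl S1 S2 T : S1 :&: S2 = set0 ->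
  Defs.inv (S1 :|: S2) T = (Defs.inv S1 T + Defs.inv S2 T)%N.
Proof. by move=> dS; rewrite !invE sum_setU. Qed.

Lemma inv_setUr S T1 T2 : T1 :&: T2 = set0 ->
  Defs.inv S (T1 :|: T2) = (Defs.inv S T1 + Defs.inv S T2)%N.
Proof.
by move=> dT; rewrite !invE -big_split; apply: eq_bigr => i _; rewrite sum_setU.
Qed.

Lemma inv0l T : Defs.inv set0 T = 0%N.
Proof. by rewrite invE big_set0. Qed.

Lemma inv0r S : Defs.inv S set0 = 0%N.
Proof. by rewrite invE big1 // => i _; rewrite big_set0. Qed.

Lemma inv_cocycle S T U : S :&: T = set0 -> S :&: U = set0 -> T :&: U = set0 ->
  (Defs.inv S T + Defs.inv (S :|: T) U = Defs.inv T U + Defs.inv S (T :|: U))%N.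
Proof. by move=> dST dSU dTU; rewrite inv_setUl // inv_setUr //; lia. Qed.

Lemma ebasisA S T U :
  emul (emul (ebasis S) (ebasis T)) (ebasis U) =
  emul (ebasis S) (emul (ebasis T) (ebasis U)).
Proof.
rewrite !ebasisM.
case dST: (S :&: T == set0); case dTU: (T :&: U == set0);
  rewrite ?emul0r ?emulr0 ?emulZl ?emulZr ?ebasisM ?setIUl ?setIUr
          ?setU_eq0 ?dST ?dTU ?andbT ?andbF ?raddf0 //=.
case dSU: (S :&: U == set0); rewrite ?raddf0 // !cmulA -!exprD setUA.
by rewrite inv_cocycle //; apply/eqP.
Qed.

Lemma emulA x y z : emul (emul x y) z = emul x (emul y z).
Proof.
rewrite (ext_expand x) !emul_suml; apply: eq_bigr => S _.
rewrite !emulZl; congr (cmul _ _).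
rewrite (ext_expand y) raddf_sum !emul_suml raddf_sum /=; apply: eq_bigr => T _.
rewrite emulZr !emulZl emulZr; congr (cmul _ _).
rewrite (ext_expand z) !raddf_sum /=; apply: eq_bigr => U _.
by rewrite !emulZr ebasisA.
Qed.

Lemma emul1r x : emul (eone n) x = x.
Proof.
rewrite {1}(ext_expand x) raddf_sum [RHS]ext_expand /=; apply: eq_bigr => T _.
by rewrite emulZr [emul _ _]ebasisM set0I eqxx inv0l expr0 cmul1 set0U.
Qed.

Lemma emulr1 x : emul x (eone n) = x.
Proof.
rewrite {1}(ext_expand x) emul_suml [RHS]ext_expand; apply: eq_bigr => T _.
by rewrite emulZl [emul _ _]ebasisM setI0 eqxx inv0r expr0 cmul1 setU0.
Qed.

End Multiplication.

Section OddElements.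

Variable n : nat.
Implicit Types (p : Pn n) (u v x y : ext n) (S T : {set 'I_n}).

Definition homog1 x := forall S, #|S| != 1%N -> x S = 0.

Lemma homog1_ew j : homog1 (ew j).
Proof. by move=> S hS; rewrite ffunE; case: eqP => // eS; rewrite eS cards1 in hS. Qed.

Lemma homog1D x y : homog1 x -> homog1 y -> homog1 (x + y).
Proof. by move=> hx hy S hS; rewrite ffunE hx // hy // addr0. Qed.

Lemma homog1Z p x : homog1 x -> homog1 (cmul p x).
Proof. by move=> hx S hS; rewrite ffunE hx // mulr0. Qed.

Lemma homog1_sum I (r : seq I) (P : pred I) (F : I -> ext n) :
  (forall i, P i -> homog1 (F i)) -> homog1 (\sum_(i <- r | P i) F i).
Proof.
move=> hF; apply: (big_ind homog1) => //; last exact: homog1D.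
by move=> S _; rewrite ffunE.
Qed.

Lemma emul_expand x y :
  emul x y = \sum_S \sum_T cmul (x S * y T) (emul (ebasis S) (ebasis T)).
Proof.
rewrite [in LHS](ext_expand x) emul_suml; apply: eq_bigr => S _.
rewrite emulZl [in LHS](ext_expand y) !raddf_sum /=; apply: eq_bigr => T _.
by rewrite emulZr cmulA.
Qed.

Lemma inv_set1 (i j : 'I_n) : Defs.inv [set i] [set j] = (j < i)%N.
Proof. by rewrite invE !big_set1. Qed.

Lemma ebasis1C (i j : 'I_n) :
  emul (ebasis [set i]) (ebasis [set j]) = - emul (ebasis [set j]) (ebasis [set i]).
Proof.
rewrite !ebasisM; have [<-|ij] := eqVneq i j.
  by rewrite setIid -cards_eq0 cards1 /= oppr0.
have disj (k l : 'I_n) : k != l -> [set k] :&: [set l] == set0.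
  by move=> kl; rewrite setI_eq0 disjoints1 inE.
have ji : j != i by rewrite eq_sym.
rewrite !disj // setUC -cmulNl !inv_set1; congr (cmul _ _).
by case: (ltngtP i j) => [||/val_inj/eqP]; rewrite ?(negbTE ij) ?expr0 ?expr1 ?opprK.
Qed.

Lemma emul_homog1C u v : homog1 u -> homog1 v -> emul u v = - emul v u.
Proof.
move=> hu hv; rewrite !emul_expand exchange_big -sumrN; apply: eq_bigr => T _.
rewrite -sumrN; apply: eq_bigr => S _.
have [/eqP/cards1P[i ->]|nS] := eqVneq #|S| 1%N; last first.
  by rewrite hu // mul0r mulr0 !cmul0r oppr0.
have [/eqP/cards1P[j ->]|nT] := eqVneq #|T| 1%N; last first.
  by rewrite hv // mul0r mulr0 !cmul0r oppr0.
by rewrite ebasis1C raddfN mulrC.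
Qed.

Lemma emul_homog1_sqr u : homog1 u -> emul u u = 0.
Proof.
move=> hu; apply/ffunP => U; rewrite [RHS]ffunE; apply/eqP.
have two_neq0 : (2%:R : Pn n) != 0 by rewrite -(mpolyC_nat n rat 2) mpolyC_eq0.
have : emul u u U * 2%:R == 0.
  by rewrite mulr_natr mulr2n {1}(emul_homog1C hu hu) ffunE addNr.
by rewrite mulf_eq0 (negbTE two_neq0) orbF.
Qed.

End OddElements.

Section OrderedProducts.

Variable n : nat.
Variable v : 'I_n -> ext n.
Implicit Types (S T : {set 'I_n}) (i j m : 'I_n).

Lemma sorted_enum_set S : sorted (fun i j : 'I_n => (i < j)%N) (enum S).
Proof.
have : sorted ltn (map val (enum S)).
  rewrite -[enum _](eq_filter (mem_enum _)).
  rewrite -(eq_filter (mem_map val_inj _)) -filter_map.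
  by rewrite (sorted_filter ltn_trans) // unlock val_ord_enum iota_ltn_sorted.
by rewrite sorted_map.
Qed.

Lemma enum_setU1_min m S :
  m \notin S -> (forall j, j \in S -> (m < j)%N) -> enum (m |: S) = m :: enum S.
Proof.
move=> mS m_min; apply: (irr_sorted_eq (leT := fun i j : 'I_n => (i < j)%N)).
- by move=> i j k; apply: ltn_trans.
- by move=> i; rewrite ltnn.
- exact: sorted_enum_set.
- rewrite /= path_sortedE; last by move=> i j k; apply: ltn_trans.
  by rewrite sorted_enum_set andbT; apply/allP => j; rewrite mem_enum => /m_min.
- by move=> i; rewrite mem_enum !inE mem_enum.
Qed.

Lemma set_ind_min (P : {set 'I_n} -> Prop) : P set0 ->
  (forall m S, m \notin S -> (forall j, j \in S -> (m < j)%N) -> P S -> P (m |: S)) ->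
  forall S, P S.
Proof.
move=> P0 PU S; have [k] := ubnP #|S|; elim: k S => // k IH S /ltnSE leSk.
have [-> //|[i iS]] := set_0Vmem S.
have [m mS m_min] := arg_minnP (fun i : 'I_n => val i) iS.
rewrite -(setD1K mS); apply: PU; first by rewrite setD11.
  move=> j; rewrite !inE => /andP[jm jS].
  by rewrite ltn_neqAle m_min // andbT; apply: contra jm => /eqP/val_inj ->.
have mS' : m \in S := mS.
by apply: IH; rewrite (cardsD1 m S) mS' add1n in leSk.
Qed.

Definition wmon S : ext n := wprod [seq v j | j <- enum S].

Lemma wmon0 : wmon set0 = eone n.
Proof. by rewrite /wmon enum_set0. Qed.

Lemma wmon1 i : wmon [set i] = v i.
Proof. by rewrite /wmon enum_set1 /= emulr1. Qed.

Lemma wmonU1 m S : m \notin S -> (forall j, j \in S -> (m < j)%N) ->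
  wmon (m |: S) = emul (v m) (wmon S).
Proof. by move=> mS m_min; rewrite /wmon enum_setU1_min. Qed.

Definition nbelow S i : nat := #|[set j in S | (j < i)%N]|.

Lemma nbelow_min S i : (forall j, j \in S -> (i < j)%N) -> nbelow S i = 0%N.
Proof.
move=> i_min; apply: eq_card0 => j; rewrite !inE.
by case jS: (j \in S) => //=; rewrite ltnNge ltnW // i_min.
Qed.

Lemma nbelowU1 S i m : m \notin S -> (m < i)%N -> nbelow (m |: S) i = (nbelow S i).+1.
Proof.
move=> mS mi; rewrite /nbelow.
have -> : [set j in m |: S | (j < i)%N] = m |: [set j in S | (j < i)%N].
  by apply/setP => j; rewrite !inE; case: (j =P m) => [->|] //=; rewrite mi.
by rewrite cardsU1 inE (negbTE mS).
Qed.

Lemma inv_set1l m T : Defs.inv [set m] T = nbelow T m.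
Proof.
rewrite invE big_set1 /nbelow -sum1_card [RHS]big_mkcond [LHS]big_mkcond /=.
by apply: eq_bigr => j _; rewrite !inE; case: (j \in T) => //=; case: ltnP.
Qed.

Hypothesis v_homog1 : forall i, homog1 (v i).

Lemma emul_wmon1 i S : emul (v i) (wmon S) =
  if i \in S then 0 else cmul ((-1) ^+ nbelow S i) (wmon (i |: S)).
Proof.
elim/set_ind_min: S => [|m S mS m_min IH].
  by rewrite wmon0 emulr1 inE nbelow_min ?expr0 ?cmul1 ?setU0 ?wmon1 // => j; rewrite inE.
rewrite wmonU1 //; case: (ltngtP i m) => [im|mi|/val_inj eim].
- have i_min j : j \in m |: S -> (i < j)%N.
    by rewrite !inE => /predU1P[->//|/m_min]; apply: ltn_trans.
  have iS : i \notin m |: S by apply/negP => /i_min; rewrite ltnn.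
  by rewrite (negbTE iS) nbelow_min // expr0 cmul1 (wmonU1 iS i_min) wmonU1.
- rewrite -emulA (emul_homog1C (v_homog1 i) (v_homog1 m)) emulNr emulA IH !inE.
  rewrite -val_eqE (gtn_eqF mi) /=; case: (i \in S); first by rewrite raddf0 oppr0.
  rewrite emulZr -wmonU1; last 2 first.
  + by rewrite !inE negb_or -val_eqE (ltn_eqF mi) mS.
  + by move=> j; rewrite !inE => /predU1P[->//|/m_min].
  by rewrite setUCA nbelowU1 // exprS mulN1r cmulNl.
- by rewrite -eim -emulA emul_homog1_sqr // emul0r setU11.
Qed.

Lemma wmonM S T : emul (wmon S) (wmon T) =
  if S :&: T == set0 then cmul ((-1) ^+ Defs.inv S T) (wmon (S :|: T)) else 0.
Proof.
elim/set_ind_min: S => [|m S mS m_min IH].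
  by rewrite wmon0 emul1r set0I eqxx inv0l expr0 cmul1 set0U.
rewrite wmonU1 // emulA IH setIUl setU_eq0.
have [dST|] := eqVneq (S :&: T) set0; last by rewrite andbF raddf0.
rewrite andbT emulZr emul_wmon1 !inE (negbTE mS) /= setI_eq0 disjoints1.
case mT: (m \in T); first by rewrite raddf0.
rewrite cmulA -exprD setUA inv_setUl; last first.
  by apply/setP => j; rewrite !inE; case: (j =P m) => // ->; rewrite (negbTE mS).
rewrite inv_set1l addnC; congr (cmul ((-1) ^+ (_ + _)) _).
apply: eq_card => j; rewrite !inE; case jS: (j \in S) => //=.
by rewrite ltnNge ltnW ?andbF // m_min.
Qed.

End OrderedProducts.

Section Substitution.

Variable n : nat.
Variables (s : 'S_n) (sw : 'I_n -> ext n).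
Implicit Types (p : Pn n) (x y : ext n).

Lemma esubstB : zmod_morphism (esubst s sw).
Proof.
move=> x y; rewrite /esubst -sumrB; apply: eq_bigr => S _.
by rewrite !ffunE raddfB cmulDl cmulNl.
Qed.

HB.instance Definition _ :=
  GRing.isZmodMorphism.Build (ext n) (ext n) (esubst s sw) esubstB.

Lemma esubstZ p x : esubst s sw (cmul p x) = cmul (msym s p) (esubst s sw x).
Proof.
by rewrite /esubst raddf_sum /=; apply: eq_bigr => S _; rewrite ffunE msymM cmulA.
Qed.

Lemma esubst_ebasis S : esubst s sw (ebasis S) = wmon sw S.
Proof.
rewrite /esubst (bigD1 S) //= big1 ?addr0 => [|T nTS].
  by rewrite ffunE eqxx msym1 cmul1.
by rewrite ffunE (negbTE nTS) msym0 cmul0r.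
Qed.

Lemma esubst_ew j : esubst s sw (ew j) = sw j.
Proof. by rewrite -[ew j]/(ebasis [set j]) esubst_ebasis wmon1. Qed.

Lemma esubst_eone : esubst s sw (eone n) = eone n.
Proof. by rewrite -[eone n]/(ebasis set0) esubst_ebasis wmon0. Qed.

Hypothesis sw_homog1 : forall i, homog1 (sw i).

Lemma esubstM x y : esubst s sw (emul x y) = emul (esubst s sw x) (esubst s sw y).
Proof.
rewrite emul_expand raddf_sum [in RHS]/esubst emul_suml; apply: eq_bigr => S _ /=.
rewrite raddf_sum emulZl !raddf_sum /=; apply: eq_bigr => T _.
rewrite esubstZ emulZr cmulA -rmorphM ebasisM (wmonM sw_homog1).
by case: ifP; rewrite ?raddf0 // esubstZ esubst_ebasis rmorph_sign cmulA.
Qed.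

Lemma esubst_wprod l : esubst s sw (wprod l) = wprod (map (esubst s sw) l).
Proof. by elim: l => [|x l IH] /=; [exact: esubst_eone | rewrite esubstM IH]. Qed.

End Substitution.

Section MultMap.

Variable n : nat.
Variable wt : 'I_n -> ext n.
Implicit Types (p : Pn n) (f g : ext n).

Lemma mult_map_esubst f : mult_map wt f = esubst 1 wt f.
Proof. by rewrite /mult_map /esubst; apply: eq_bigr => S _; rewrite msym1m. Qed.

Lemma mult_mapB : zmod_morphism (mult_map wt).
Proof. by move=> f g; rewrite !mult_map_esubst raddfB. Qed.

HB.instance Definition _ :=
  GRing.isZmodMorphism.Build (ext n) (ext n) (mult_map wt) mult_mapB.

Lemma mult_mapZ p f : mult_map wt (cmul p f) = cmul p (mult_map wt f).
Proof. by rewrite !mult_map_esubst esubstZ msym1m. Qed.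

Lemma mult_map_ebasis S : mult_map wt (ebasis S) = wmon wt S.
Proof. by rewrite mult_map_esubst esubst_ebasis. Qed.

Lemma mult_map1 : mult_map wt (eone n) = eone n.
Proof. by rewrite mult_map_esubst esubst_eone. Qed.

Lemma mult_mapM f g : (forall i, homog1 (wt i)) ->
  mult_map wt (emul f g) = emul (mult_map wt f) (mult_map wt g).
Proof. by move=> wt_homog1; rewrite !mult_map_esubst esubstM. Qed.

End MultMap.

Section Weight.

Variable n : nat.
Implicit Types (x y : ext n) (S T U : {set 'I_n}).

Definition wgt S : nat := \sum_(i in S) i.

Definition monic_at x S :=
  x S = 1 /\ forall T, x T != 0 -> T = S \/ (wgt S < wgt T)%N.

Lemma wgtU S T : S :&: T = set0 -> wgt (S :|: T) = (wgt S + wgt T)%N.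
Proof. exact: sum_setU. Qed.

Lemma wgt_leT S : (wgt S <= wgt setT)%N.
Proof. by rewrite -(setUCr S) wgtU ?leq_addr ?setICr. Qed.

Lemma emul_supp x y U : emul x y U != 0 ->
  exists S T, [/\ x S != 0, y T != 0, S :&: T = set0 & U = S :|: T].
Proof.
rewrite emulE => /sum_neq0_exists[S _ /sum_neq0_exists[T _]].
rewrite !mulf_eq0 !negb_or => /and3P[/emul_const_neq0[dST ->] xS yT].
by exists S, T.
Qed.

Lemma monic_atM x y S T : monic_at x S -> monic_at y T -> S :&: T = set0 ->
  emul x y (S :|: T) = (-1) ^+ Defs.inv S T /\
  forall U, emul x y U != 0 -> U = S :|: T \/ (wgt (S :|: T) < wgt U)%N.
Proof.
move=> [xS x_supp] [yT y_supp] dST.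
have lead S' T' : x S' != 0 -> y T' != 0 -> S' :&: T' = set0 ->
    S' = S /\ T' = T \/ (wgt (S :|: T) < wgt (S' :|: T'))%N.
  move=> /x_supp hS /y_supp hT dST'; rewrite !wgtU //.
  by case: hS hT => [->|lS] [->|lT]; [left | right; lia ..].
have only S' T' : emul_const S' T' (S :|: T) * (x S' * y T') != 0 -> S' = S /\ T' = T.
  rewrite !mulf_eq0 !negb_or => /and3P[/emul_const_neq0[dST' eU] hx hy].
  by case: (lead _ _ hx hy dST') => //; rewrite -eU ltnn.
split=> [|U /emul_supp[S' [T' [hx hy dST' ->]]]]; last first.
  by case: (lead _ _ hx hy dST') => [[-> ->]|]; [left | right].
rewrite emulE (bigD1 S) //= [X in _ + X]big1 ?addr0; last first.
  move=> S' nS'S; apply: big1 => T' _.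
  by apply: contraTeq nS'S => /only[-> _]; rewrite eqxx.
rewrite (bigD1 T) //= [X in _ + X]big1 ?addr0; last first.
  by move=> T' nT'T; apply: contraTeq nT'T => /only[_ ->]; rewrite eqxx.
by rewrite xS yT !mulr1 /emul_const dST !eqxx.
Qed.

End Weight.

Section Triangular.

Variable n : nat.
Variable wt : 'I_n -> ext n.
Hypothesis wt_tri : triangular_form wt.
Implicit Types (f y : ext n) (S T : {set 'I_n}).

Lemma triangular_homog1 i : homog1 (wt i).
Proof.
have [F ->] := wt_tri; apply: homog1D; first exact: homog1_ew.
by apply: homog1_sum => j _; apply/homog1Z/homog1_ew.
Qed.

Lemma triangular_monic i : monic_at (wt i) [set i].
Proof.
have [F ->] := wt_tri; split=> [|T]; rewrite !ffunE sum_ffunE.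
  rewrite eqxx big1 ?addr0 // => j ij; rewrite !ffunE.
  by rewrite (inj_eq set1_inj) -val_eqE (ltn_eqF ij) mulr0.
have [->|nTi] := eqVneq T [set i]; [by left | rewrite add0r => nz; right].
have [j ij] := sum_neq0_exists nz; rewrite !ffunE mulf_eq0 negb_or => /andP[_].
have [->|nTj] := eqVneq T [set j]; last by rewrite eqxx.
by rewrite /wgt !big_set1.
Qed.

Lemma wmon_monic S : monic_at (wmon wt S) S.
Proof.
elim/set_ind_min: S => [|m S mS m_min IH].
  rewrite wmon0; split=> [|T]; rewrite ffunE ?eqxx //.
  by have [->|_] := eqVneq T set0; [left | rewrite eqxx].
have dmS : [set m] :&: S = set0.
  by apply/setP => j; rewrite !inE; case: (j =P m) => // ->; rewrite (negbTE mS).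
have [lead supp] := monic_atM (triangular_monic m) IH dmS.
by rewrite wmonU1 //; split => //; rewrite lead inv_set1l nbelow_min.
Qed.

Lemma mult_map_eq0 f : mult_map wt f = 0 -> f = 0.
Proof.
move=> f0; apply/ffunP => S; rewrite [RHS]ffunE.
(* the S-coordinate of mult_map wt f involves f S and the f T with wgt T < wgt S *)
have [k] := ubnP (wgt S); elim: k S => // k IH S /ltnSE leSk.
have := congr1 (fun g : ext n => g S) f0; rewrite /mult_map sum_ffunE ffunE.
rewrite (bigD1 S) //= big1 ?addr0 => [|T nTS].
  by rewrite ffunE (proj1 (wmon_monic S)) mulr1.
rewrite ffunE; have [->|] := eqVneq (wmon wt T S) 0; first by rewrite mulr0.
case/(proj2 (wmon_monic T)) => [eST|ltTS]; first by rewrite eST eqxx in nTS.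
by rewrite IH ?mul0r // (leq_trans ltTS).
Qed.

Lemma mult_map_inj : injective (mult_map wt).
Proof.
move=> f g e; apply/eqP; rewrite -subr_eq0; apply/eqP/mult_map_eq0.
by rewrite raddfB /= e subrr.
Qed.

Lemma mult_map_onto_ebasis S : exists f, mult_map wt f = ebasis S.
Proof.
(* downward induction on the weight: w_S is wt_S minus terms of larger weight *)
have [k] := ubnP (wgt [set: 'I_n] - wgt S)%N; elim: k S => // k IH S /ltnSE leSk.
have /fin_all_exists[g hg] T :
    exists f, wmon wt S T != 0 -> T != S -> mult_map wt f = ebasis T.
  have [nz|] := boolP (wmon wt S T != 0); last by exists 0.
  case: (proj2 (wmon_monic S) T nz) => [->|ltST]; first by exists 0; rewrite eqxx.
  have [|f hf] := IH T; first by have := wgt_leT T; lia.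
  by exists f.
exists (ebasis S - \sum_(T | T != S) cmul (wmon wt S T) (g T)).
rewrite raddfB /= mult_map_ebasis [mult_map wt _]raddf_sum /=.
have -> : \sum_(T | T != S) mult_map wt (cmul (wmon wt S T) (g T)) =
          \sum_(T | T != S) cmul (wmon wt S T) (ebasis T).
  apply: eq_bigr => T nTS; rewrite mult_mapZ.
  by have [->|nz] := eqVneq (wmon wt S T) 0; rewrite ?cmul0r // hg.
by rewrite {1}(ext_expand (wmon wt S)) (bigD1 S) //= (proj1 (wmon_monic S)) cmul1 addrK.
Qed.

Lemma mult_map_surj y : exists f, mult_map wt f = y.
Proof.
have /fin_all_exists[g hg] := mult_map_onto_ebasis.
exists (\sum_S cmul (y S) (g S)); rewrite raddf_sum [RHS]ext_expand.
by apply: eq_bigr => S _; rewrite /= mult_mapZ hg.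
Qed.

End Triangular.

Lemma symmetric_tperm_adj n (p : Pn n) :
  (forall a b : 'I_n, val b = (val a).+1 -> msym (tperm a b) p = p) ->
  p \is symmetric.
Proof.
move=> p_adj.
have fixM (s t : 'S_n) : msym s p = p -> msym t p = p -> msym (s * t)%g p = p.
  by move=> sp tp; rewrite msymMm sp tp.
have fix_tperm d (i j : 'I_n) : val j = (i + d.+1)%N -> msym (tperm i j) p = p.
  elim: d i j => [|d IH] i j /= ji; first by apply: p_adj => /=; rewrite ji addn1.
  have kn : (i + d.+1 < n)%N by have := ltn_ord j; lia.
  pose k := Ordinal kn.
  have ki : msym (tperm k i) p = p by rewrite tpermC; apply: IH.
  have [kj ij] : k != j /\ i != j by split; apply/eqP => /(congr1 val) /=; lia.
  rewrite -(tpermJ_tperm kj ij) /conjg tpermV; apply: (fixM) => //.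
  by apply: (fixM) => //; apply: p_adj => /=; lia.
apply/issymP => s; have [ts -> _] := prod_tpermP s.
elim: ts => [|[i j] ts IH]; first by rewrite big_nil msym1m.
rewrite big_cons; apply: (fixM) => //=.
have [ltij|ltji|/val_inj ->] := ltngtP i j; last by rewrite tperm1 msym1m.
  by apply: (fix_tperm (j - i.+1)%N) => /=; lia.
by rewrite tpermC; apply: (fix_tperm (i - j.+1)%N) => /=; lia.
Qed.

Section SymmetricCoefficients.

Variable n : nat.
Implicit Types (a b : 'I_n) (f y : ext n) (S : {set 'I_n}).

Definition simple_gen a b (j : 'I_n) : ext n :=
  if j == a then ew a + cmul ('X_a - 'X_b) (ew b) else ew j.

Lemma simple_actE a b : simple_act a b =1 esubst (tperm a b) (simple_gen a b).
Proof. by []. Qed.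

Lemma simple_gen_homog1 a b j : homog1 (simple_gen a b j).
Proof.
rewrite /simple_gen; case: (j == a); last exact: homog1_ew.
by apply: homog1D; [exact: homog1_ew | apply/homog1Z/homog1_ew].
Qed.

Lemma simple_act_mult_map (wt : 'I_n -> ext n) a b f :
  (forall i, simple_act a b (wt i) = wt i) ->
  simple_act a b (mult_map wt f) = mult_map wt [ffun S => msym (tperm a b) (f S)].
Proof.
move=> wt_fix; rewrite simple_actE /mult_map raddf_sum; apply: eq_bigr => S _.
rewrite /= esubstZ ffunE (esubst_wprod _ (simple_gen_homog1 a b)) -map_comp.
by congr (cmul _ (wprod _)); apply: eq_map => j /=; rewrite -simple_actE wt_fix.
Qed.

Lemma ebasis_symcoef S : symcoef (ebasis S).
Proof. by move=> T; rewrite ffunE rpred_nat. Qed.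

Variable wt : 'I_n -> ext n.
Hypotheses (wt_tri : triangular_form wt) (wt_sym : forall i, ext_sym (wt i)).

Lemma mult_map_ext_sym f : symcoef f -> ext_sym (mult_map wt f).
Proof.
move=> f_sym a b ab; rewrite simple_act_mult_map => [|i]; last exact: wt_sym.
by congr (mult_map wt _); apply/ffunP => S; rewrite ffunE (issymP _ (f_sym S)).
Qed.

Lemma ext_sym_mult_map f : ext_sym (mult_map wt f) -> symcoef f.
Proof.
move=> f_sym S; apply: symmetric_tperm_adj => a b ab.
have := f_sym a b ab; rewrite simple_act_mult_map => [|i]; last exact: wt_sym.
by move/(mult_map_inj wt_tri)/ffunP/(_ S); rewrite ffunE.
Qed.

Lemma mult_map_onto_ext_sym y : ext_sym y -> exists2 f, symcoef f & mult_map wt f = y.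
Proof.
have [f <-] := mult_map_surj wt_tri y.
by move=> /ext_sym_mult_map f_sym; exists f.
Qed.

Lemma card_set_ord : #|{set 'I_n}| = (2 ^ n)%N.
Proof. by rewrite -cardsT -powersetT card_powerset cardsT card_ord. Qed.

Lemma ext_sym_free :
  exists B : 'I_(2 ^ n) -> ext n,
    (forall k, ext_sym (B k)) /\
    (forall x : ext n, ext_sym x ->
       exists! c : {ffun 'I_(2 ^ n) -> {mpoly rat[n]}},
         (forall k, c k \is symmetric) /\ x = \sum_(k < 2 ^ n) cmul (c k) (B k)).
Proof.
pose e (k : 'I_(2 ^ n)) : {set 'I_n} := enum_val (cast_ord (esym card_set_ord) k).
pose e' S : 'I_(2 ^ n) := cast_ord card_set_ord (enum_rank S).
have ee' : cancel e' e by move=> S; rewrite /e /e' cast_ordK enum_rankK.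
have e'e : cancel e e' by move=> k; rewrite /e /e' enum_valK cast_ordKV.
have sum_e (F : {set 'I_n} -> ext n) : \sum_S F S = \sum_k F (e k).
  by rewrite (reindex e) //; exists e' => ? _; [exact: e'e | exact: ee'].
exists (fun k => wmon wt (e k)); split=> [k|x /mult_map_onto_ext_sym[f f_sym <-]].
  by rewrite -mult_map_ebasis; apply/mult_map_ext_sym/ebasis_symcoef.
exists [ffun k => f (e k)]; split.
  split=> [k|]; first by rewrite ffunE.
  by rewrite /mult_map sum_e; apply: eq_bigr => k _; rewrite ffunE.
move=> c [_ c_eq]; apply/ffunP => k; rewrite ffunE.
suff -> : f = [ffun S => c (e' S)] by rewrite ffunE e'e.
apply: (mult_map_inj wt_tri); rewrite c_eq /mult_map sum_e.
by apply: eq_bigr => j _; rewrite ffunE e'e.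
Qed.

End SymmetricCoefficients.

Lemma msymX1 n (s : 'S_n) (i : 'I_n) : msym s 'X_i = 'X_(s i) :> Pn n.
Proof.
rewrite msymX; congr 'X_[_]; apply/mnmP => j; rewrite !mnmE.
by rewrite (canF_eq (permK s)).
Qed.

Section SymmetricGenerators.

Variable n : nat.

(* x_l, with the junk value 0 for l >= n *)
Definition xvar (l : nat) : Pn n := if insub l is Some i then 'X_i else 0.

Lemma xvarE (i : 'I_n) : xvar i = 'X_i.
Proof. by rewrite /xvar valK. Qed.

(* e_m(x_0, ..., x_(j-1)), by the recursion in the number of variables *)
Fixpoint esym_prefix (m j : nat) {struct j} : Pn n :=
  if j is j'.+1 then
    if m is m'.+1 then esym_prefix m j' + xvar j' * esym_prefix m' j' else 1
  else (m == 0)%:R.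

Lemma esym_prefix0 j : esym_prefix 0 j = 1.
Proof. by case: j. Qed.

Definition wlin (al : 'I_n -> Pn n) : ext n := \sum_j cmul (al j) (ew j).

Definition wsym_coef (i j : 'I_n) : Pn n :=
  if (i <= j)%N then esym_prefix (j - i) j else 0.

Definition wsym (i : 'I_n) : ext n := wlin (wsym_coef i).

Lemma wsym_triangular : triangular_form wsym.
Proof.
exists wsym_coef => i; rewrite /wsym /wlin (bigD1 i) //=.
rewrite /wsym_coef leqnn subnn esym_prefix0 cmul1; congr (_ + _).
rewrite (bigID (fun j : 'I_n => (i < j)%N)) /= [X in _ + X]big1 ?addr0.
  by apply: eq_bigl => j; rewrite andb_idl // => ij; rewrite -val_eqE neq_ltn ij orbT.
move=> j /andP[ji]; rewrite -leqNgt /wsym_coef => le_ji.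
case: leqP => [le_ij|_]; last exact: cmul0r.
by rewrite -(inj_eq val_inj) eqn_leq le_ji le_ij in ji.
Qed.

Variables a b : 'I_n.

Lemma msym_xvar (l : nat) : l != a -> l != b -> msym (tperm a b) (xvar l) = xvar l.
Proof.
rewrite /xvar; case: insubP => [i _ <-|_] la lb; last by rewrite msym0.
by rewrite msymX1 tpermD // -val_eqE eq_sym.
Qed.

Lemma simple_gen_eq j :
  simple_gen a b j = ew j + cmul ((j == a)%:R * ('X_a - 'X_b)) (ew b).
Proof.
rewrite /simple_gen; have [->|_] := eqVneq j a; first by rewrite mul1r.
by rewrite mul0r cmul0r addr0.
Qed.

Lemma simple_act_wlin al : simple_act a b (wlin al) =
  wlin (fun j => msym (tperm a b) (al j) +
                 (j == b)%:R * (msym (tperm a b) (al a) * ('X_a - 'X_b))).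
Proof.
rewrite simple_actE /wlin raddf_sum.
under eq_bigr do rewrite /= esubstZ esubst_ew simple_gen_eq raddfD /= cmulA.
under [RHS]eq_bigr do rewrite cmulDl.
rewrite !big_split /=; congr (_ + _).
rewrite (bigD1 a) // [in RHS](bigD1 b) //= !eqxx !mul1r.
rewrite !big1 ?addr0 // => j nj; first by rewrite (negbTE nj) mul0r cmul0r.
by rewrite (negbTE nj) mul0r mulr0 cmul0r.
Qed.

Hypothesis ab : b = a.+1 :> nat.

Lemma esym_prefix_low m j : (j <= a)%N ->
  msym (tperm a b) (esym_prefix m j) = esym_prefix m j.
Proof.
elim: j m => [|j IH] [|m] ja /=; rewrite ?rmorph_nat ?msym1 //.
rewrite msymD msymM !IH ?(ltnW ja) // msym_xvar //.
  by rewrite neq_ltn ja.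
by rewrite ab neq_ltn ltnS (ltnW ja).
Qed.

Lemma esym_prefix_high m j : (a.+2 <= j)%N ->
  msym (tperm a b) (esym_prefix m j) = esym_prefix m j.
Proof.
have xa : xvar a = 'X_a by rewrite xvarE.
have xb : xvar a.+1 = 'X_b by rewrite -ab xvarE.
have sa : msym (tperm a b) 'X_a = 'X_b :> Pn n by rewrite msymX1 tpermL.
have sb : msym (tperm a b) 'X_b = 'X_a :> Pn n by rewrite msymX1 tpermR.
have low k := esym_prefix_low k (leqnn a).
elim: j m => // j IH [|m] aj /=; first by rewrite msym1.
rewrite msymD msymM; case: (ltngtP a.+1 j) => [ltj|gtj|eqj].
- have ja : j != a by rewrite neq_ltn (ltn_trans (ltnSn a) ltj) orbT.
  have jb : j != b by rewrite ab neq_ltn ltj orbT.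
  by rewrite !IH // msym_xvar.
- by move: aj; rewrite ltnS leqNgt gtj.
rewrite -eqj /= xb sb; case: m => [|m] /=;
  by rewrite !msymD !msymM !low xa sa ?msym1 ?esym_prefix0; ring.
Qed.

Lemma esym_prefix_tperm m j : j != b ->
  msym (tperm a b) (esym_prefix m j) = esym_prefix m j.
Proof.
move=> jb; have [ja|aj] := leqP j a; first exact: esym_prefix_low.
by apply: esym_prefix_high; rewrite ltn_neqAle aj andbT -ab eq_sym.
Qed.

Lemma wsym_simple_act i : simple_act a b (wsym i) = wsym i.
Proof.
rewrite /wsym simple_act_wlin /wlin; apply: eq_bigr => j _; congr (cmul _ _).
have [->|jb] := eqVneq j b; last first.
  rewrite mul0r addr0 /wsym_coef; case: ifP => _; last exact: msym0.
  by rewrite esym_prefix_tperm // val_eqE.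
rewrite mul1r /wsym_coef ab; case: (leqP i a) => ia.
  rewrite (leqW ia) subSn //= msymD msymM !esym_prefix_low // xvarE msymX1 tpermL.
  ring.
case: (leqP i a.+1) => ia1; last by rewrite msym0 mul0r addr0.
have -> : (a.+1 - i = 0)%N by apply/eqP; rewrite subn_eq0.
by rewrite esym_prefix0 msym1 msym0 mul0r addr0.
Qed.

End SymmetricGenerators.

Lemma wsym_ext_sym n (i : 'I_n) : ext_sym (wsym i).
Proof. by move=> a b ab; apply: wsym_simple_act. Qed.

Theorem theorem3p1 (n : nat) :
  (* Lambda^w_n is a free Lambda_n-module of rank 2^n *)
  (exists B : 'I_(2 ^ n) -> ext n,
      (forall k, ext_sym (B k)) /\
      (forall x : ext n, ext_sym x ->
         exists! c : {ffun 'I_(2 ^ n) -> {mpoly rat[n]}},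
           (forall k, c k \is symmetric) /\
           x = \sum_(k < 2 ^ n) cmul (c k) (B k)))
  /\
  (* elements of the required form exist *)
  (exists wt : 'I_n -> ext n, triangular_form wt /\ forall i, ext_sym (wt i))
  /\
  (* for any such elements, multiplication is a ring isomorphism
     Lambda_n (x) /\[wt_1..wt_n] ~= Lambda^w_n *)
  (forall wt : 'I_n -> ext n,
      triangular_form wt -> (forall i, ext_sym (wt i)) ->
      [/\ mult_map wt (eone n) = eone n,
          (forall f g, symcoef f -> symcoef g ->
             mult_map wt (f + g) = mult_map wt f + mult_map wt g),
          (forall f g, symcoef f -> symcoef g ->
             mult_map wt (emul f g) = emul (mult_map wt f) (mult_map wt g)),
          (forall f, symcoef f -> ext_sym (mult_map wt f)) &
          (forall f g, symcoef f -> symcoef g ->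
             mult_map wt f = mult_map wt g -> f = g) /\
          (forall y, ext_sym y -> (exists2 f, symcoef f & mult_map wt f = y))]).
Proof.
have wsym_tri := @wsym_triangular n; have wsym_sym := @wsym_ext_sym n.
split; first exact: ext_sym_free wsym_tri wsym_sym.
split; first by exists (@wsym n).
move=> wt wt_tri wt_sym; split.
- exact: mult_map1.
- by move=> f g _ _; rewrite raddfD.
- by move=> f g _ _; apply/mult_mapM/triangular_homog1.
- exact: mult_map_ext_sym.
split; first by move=> f g _ _; apply: mult_map_inj.
exact: mult_map_onto_ext_sym.
Qed.
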